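(* Let $G\subset E'$ be a separating linear subspace, let $(T^{E}_{m},T^{\mathbb{K}}_{m})_{m\in\mathcal{M}}$ be a strong, consistent family for $(\mathcal{FV},E)$, and let $U$ be a set of uniqueness for $\mathcal{FV}(\Omega)$. Then the restriction map \[ R_{U,G}\colon S(\mathcal{FV}(\Omega)\varepsilon E)\to \mathcal{FV}_{G}(U,E),\quad f\mapsto (T^{E}_{m}(f)(x))_{(m,x)\in U}, \] is injective.
   Context: $\mathbb{K}\in\{\mathbb{R},\mathbb{C}\}$; $E$ is a non-trivial locally convex Hausdorff space (lcHs) over $\mathbb{K}$ with a directed fundamental system of seminorms $(p_\alpha)_{\alpha\in\mathfrak{A}}$ (for $E=\mathbb{K}$ the system is $\{|\cdot|\}$); $E'$ is its topological dual. A linear subspace $G\subset E'$ is separating if $e'(x)=0$ for all $e'\in G$ implies $x=0$. Weighted function spaces: Let $\Omega,J,L$ be non-empty sets, $(M_l)_{l\in L}$ non-empty sets and $\mathcal{V}=((\nu_{j,l,m})_{m\in M_l})_{j\in J,l\in L}$ functions $\nu_{j,l,m}\colon\Omega\to[0,\infty)$ such that for all $x\in\Omega$, $l\in L$ there is $j\in J$ with $\nu_{j,l,m}(x)>0$ for all $m\in M_l$. Let $\mathcal{M}_{\mathrm{top}}:=\bigcup_{l}M_l$ and $\mathcal{M}_0,\mathcal{M}_r$ sets such that the three are pairwise disjoint; $\mathcal{M}:=\mathcal{M}_{\mathrm{top}}\cup\mathcal{M}_0\cup\mathcal{M}_r$. Let $(\omega_m)_{m\in\mathcal{M}}$ be non-empty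 sets with $\Omega\subset\omega_m$ for $m\in\mathcal{M}_{\mathrm{top}}$. For $F\in\{E,\mathbb{K}\}$ let $T^{F}_m\colon \operatorname{dom}T^F_m\subset F^\Omega\to F^{\omega_m}$ be linear maps, $m\in\mathcal{M}$. Put $W(\Omega,F):=\bigcap_{m\in\mathcal{M}}\operatorname{dom}T^F_m\cap\bigcap_{m\in\mathcal{M}_0}\ker T^F_m$ and $\mathcal{FV}(\Omega,F):=\{f\in W(\Omega,F): |f|_{j,l,\alpha}<\infty\ \forall j\in J,l\in L,\alpha\}$ where $|f|_{j,l,\alpha}:=\sup_{x\in\Omega,m\in M_l}p_\alpha(T^F_m(f)(x))\nu_{j,l,m}(x)$, topologised by these seminorms; $\mathcal{FV}(\Omega):=\mathcal{FV}(\Omega,\mathbb{K})$ with seminorms $|f|_{j,l}$. Write $T^F_{m,x}(f):=T^F_m(f)(x)$. Such a space is a dom-space if its system of seminorms is directed and, in the scalar case, all point evaluations $\delta_x\colon f\mapsto f(x)$, $x\in\Omega$, are continuous on $\mathcal{FV}(\Omega)$. $\mathcal{FV}(\Omega)\varepsilon E$ is the space of continuous linear maps $\mathcal{FV}(\Omega)'_\kappa\to E$ ($\kappa$: topology of uniform convergence on absolutely convex compact subsets of $\mathcal{FV}(\Omega)$) with the topology of uniform convergence on equicontinuous sets; $S\colon \mathcal{FV}(\Omega)\varepsilon E\to E^\Omega$, $S(u)(x):=u(\delta_x)$. If $\mathcal{FV}(\Omega)$ and $\mathcal{FV}(\Omega,E)$ are dom-spaces built with the same data $\Omega,\mathcal{V},\mathcal{M}_{\mathrm{top}},\mathcal{M}_0,\mathcal{M}_r,(\omega_m)$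 and operators $T^{\mathbb{K}}_m$ resp. $T^E_m$, then $(T^E_m,T^{\mathbb{K}}_m)_{m\in\mathcal{M}}$ is a defining family for $(\mathcal{FV},E)$. It is consistent if for all $u\in\mathcal{FV}(\Omega)\varepsilon E$, $m\in\mathcal{M}$, $x\in\omega_m$: $S(u)\in\operatorname{dom}T^E_m$, the restriction of $T^{\mathbb{K}}_{m,x}$ to $\mathcal{FV}(\Omega)$ lies in $\mathcal{FV}(\Omega)'$, and $T^E_m(S(u))(x)=u(T^{\mathbb{K}}_{m,x})$. It is strong if for all $e'\in E'$, $f\in\mathcal{FV}(\Omega,E)$, $m\in\mathcal{M}$: $e'\circ f\in\operatorname{dom}T^{\mathbb{K}}_m$ and $T^{\mathbb{K}}_m(e'\circ f)=e'\circ T^E_m(f)$ on $\omega_m$. A set $U\subset\bigcup_{m\in\mathcal{M}}\{m\}\times\omega_m$ is a set of uniqueness for $\mathcal{FV}(\Omega)$ if $T^{\mathbb{K}}_{m,x}\in\mathcal{FV}(\Omega)'$ for all $(m,x)\in U$ and every $f\in\mathcal{FV}(\Omega)$ with $T^{\mathbb{K}}_m(f)(x)=0$ for all $(m,x)\in U$ is $0$. For separating $G\subset E'$, $\mathcal{FV}_G(U,E)$ is the set of $f\colon U\to E$ such that for every $e'\in G$ there is (a necessarily unique) $f_{e'}\in\mathcal{FV}(\Omega)$ with $T^{\mathbb{K}}_m(f_{e'})(x)=e'(f(m,x))$ for all $(m,x)\in U$. For strong consistent families the map $R_{U,G}$ in the claim takes values in $\mathcal{FV}_G(U,E)$. *)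

From HB Require Import structures.
From mathcomp Require Import all_boot all_order all_algebra.
Set Implicit Arguments. Unset Strict Implicit. Unset Printing Implicit Defensive.
Import Order.TTheory GRing.Theory Num.Theory.
Local Open Scope ring_scope.

Section Defs.
Variable K : numFieldType.

Definition is_seminorm (V : lmodType K) (q : V -> K) :=
  [/\ forall v, 0 <= q v,
      forall v w, q (v + w) <= q v + q w &
      forall (c : K) v, q (c *: v) = `|c| * q v].

(* (p_a)_{a in A} is a directed fundamental system of seminorms of a
   Hausdorff locally convex topology on V *)
Definition lcHs (V : lmodType K) (A : Type) (p : A -> V -> K) :=
  [/\ inhabited A,
      forall a, is_seminorm (p a),
      (forall a b, exists c (C : K), 0 <= C /\
          forall v, p a v <= C * p c v /\ p b v <= C * p c v) &
      forall v, (forall a, p a v = 0) -> v = 0].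

Definition nontrivial (V : lmodType K) := exists v : V, v != 0.

(* topological dual E': linear functionals whose preimage of the closed unit
   disc contains a basic 0-neighbourhood {v | p_{a_i} v <= r for all i} *)
Definition Edual (V : lmodType K) (A : Type) (p : A -> V -> K) (e : V -> K) :=
  (forall v w (a : K), e (a *: v + w) = a * e v + e w) /\
  exists n (idx : 'I_n -> A) (r : K), 0 < r /\
    forall v, (forall i, p (idx i) v <= r) -> `|e v| <= 1.

Definition separating (V : lmodType K) (A : Type) (p : A -> V -> K)
    (G : (V -> K) -> Prop) :=
  [/\ forall e, G e -> Edual p e,
      G (fun _ => 0),
      (forall e1 e2 (a : K), G e1 -> G e2 -> G (fun v => a * e1 v + e2 v)) &
      forall v, (forall e, G e -> e v = 0) -> v = 0].

Record wdata := WData {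
  Om : Type;
  Jt : Type;
  Lt : Type;
  Mt : Type;
  Ml : Lt -> Mt -> Prop;
  M0 : Mt -> Prop;
  Mr : Mt -> Prop;
  om : Mt -> Type;
  emb : forall m, Om -> om m;     (* inclusion Omega c omega_m (m in M_top) *)
  nu : Jt -> Lt -> Mt -> Om -> K
}.

Arguments Ml : clear implicits.
Arguments M0 : clear implicits.
Arguments Mr : clear implicits.
Arguments om : clear implicits.
Arguments nu : clear implicits.
Arguments emb : clear implicits.

Definition Mtop (D : wdata) (m : Mt D) := exists l, Ml D l m.

Definition wdata_ok (D : wdata) :=
  inhabited (Om D) /\ inhabited (Jt D) /\ inhabited (Lt D) /\
  (forall l : Lt D, exists m, Ml D l m) /\
  (forall m, inhabited (om D m)) /\
  (forall j l m x, 0 <= nu D j l m x) /\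
  (forall x l, exists j, forall m, Ml D l m -> 0 < nu D j l m x) /\
  (forall m : Mt D, ~ (Mtop m /\ M0 D m) /\ ~ (Mtop m /\ Mr D m) /\ ~ (M0 D m /\ Mr D m)) /\
  (forall m : Mt D, [\/ Mtop m, M0 D m | Mr D m]) /\
  (forall m : Mt D, Mtop m -> injective (emb D m)).

Record opfam (D : wdata) (F : lmodType K) := OpFam {
  odom : forall m : Mt D, (Om D -> F) -> Prop;
  oT : forall m : Mt D, (Om D -> F) -> (om D m -> F)
}.

Arguments oT [D F] o m _ _.

Definition opfam_ok (D : wdata) (F : lmodType K) (T : opfam D F) :=
  forall m, odom T m (fun _ => 0) /\
    forall (f g : Om D -> F) (a : K), odom T m f -> odom T m g ->
      odom T m (fun x => a *: f x + g x) /\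
      oT T m (fun x => a *: f x + g x) = (fun y => a *: oT T m f y + oT T m g y).

Section Spaces.
Variables (D : wdata) (F : lmodType K) (A : Type) (p : A -> F -> K)
  (T : opfam D F).

Definition Wsp (f : Om D -> F) :=
  (forall m, odom T m f) /\ (forall m, M0 D m -> forall y, oT T m f y = 0).

(* FVqle i f r  <->  |f|_{j,l,alpha} <= r  with i = (j,l,alpha) *)
Definition FVqle (i : Jt D * Lt D * A) (f : Om D -> F) (r : K) :=
  forall (x : Om D) (m : Mt D), Ml D i.1.2 m ->
    p i.2 (oT T m f (emb D m x)) * nu D i.1.1 i.1.2 m x <= r.

Definition FVsp (f : Om D -> F) :=
  Wsp f /\ forall i, exists B, FVqle i f B.

Definition FVdirected :=
  forall i1 i2, exists i3 (C : K), 0 <= C /\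
    forall f, FVsp f -> forall r, FVqle i3 f r ->
      FVqle i1 f (C * r) /\ FVqle i2 f (C * r).
End Spaces.

(* scalar case: F = K with the single seminorm |.| *)
Definition Kp : unit -> K^o -> K := fun _ c => `|(c : K)|.

Section Scalar.
Variables (D : wdata) (TK : opfam D K^o).

Definition FVK (f : Om D -> K) := FVsp Kp TK f.

Definition FVdual (y : (Om D -> K) -> K) :=
  (forall f g (a : K), FVK f -> FVK g ->
      y (fun x => a * f x + g x) = a * y f + y g) /\
  exists n (idx : 'I_n -> Jt D * Lt D * unit) (r : K), 0 < r /\
    forall f, FVK f -> (forall i, FVqle Kp TK (idx i) f r) -> `|y f| <= 1.

Definition FVopen (O : (Om D -> K) -> Prop) :=
  forall f, O f -> FVK f ->
    exists n (idx : 'I_n -> Jt D * Lt D * unit) (eps : K), 0 < eps /\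
      forall g, FVK g -> (forall i, FVqle Kp TK (idx i) (fun x => g x - f x) eps) ->
        O g.

Definition FVcompact (C : (Om D -> K) -> Prop) :=
  (forall f, C f -> FVK f) /\
  forall (I : Type) (O : I -> (Om D -> K) -> Prop),
    (forall i, FVopen (O i)) -> (forall f, C f -> exists i, O i f) ->
    exists n (idx : 'I_n -> I), forall f, C f -> exists k, O (idx k) f.

Definition absconvex (C : (Om D -> K) -> Prop) :=
  forall f g (a b : K), C f -> C g -> `|a| + `|b| <= 1 ->
    C (fun x => a * f x + b * g x).

Variables (E : lmodType K) (A : Type) (p : A -> E -> K).

(* FV(Omega) eps E: continuous linear maps FV(Omega)'_kappa -> E
   (u is given on all functionals, only its values on FV(Omega)' matter) *)
Definition epsprod (u : ((Om D -> K) -> K) -> E) :=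
  (forall y z (a : K), FVdual y -> FVdual z ->
      u (fun f => a * y f + z f) = a *: u y + u z) /\
  forall alpha, exists n (Ks : 'I_n -> (Om D -> K) -> Prop) (r : K),
    [/\ 0 < r, (forall i, absconvex (Ks i) /\ FVcompact (Ks i)) &
      forall y, FVdual y -> (forall i f, Ks i f -> `|y f| <= r) ->
        p alpha (u y) <= 1].

Definition Smap (u : ((Om D -> K) -> K) -> E) : Om D -> E :=
  fun x => u (fun f => f x).

Definition Srange (f : Om D -> E) := exists u, epsprod u /\ f = Smap u.

Variable TE : opfam D E.

Definition defining_family :=
  [/\ opfam_ok TK, opfam_ok TE,
      FVdirected Kp TK, (forall x : Om D, FVdual (fun f => f x)) &
      FVdirected p TE].

Definition consistent :=
  forall u, epsprod u -> forall (m : Mt D) (x : om D m),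
    [/\ odom TE m (Smap u),
        FVdual (fun f => oT TK m f x) &
        oT TE m (Smap u) x = u (fun f => oT TK m f x)].

Definition strong :=
  forall e, Edual p e -> forall f, FVsp p TE f -> forall m : Mt D,
    odom TK m (fun x => e (f x)) /\
    forall y, oT TK m (fun x => e (f x)) y = e (oT TE m f y).

Definition uniqueness_set (U : {m : Mt D & om D m} -> Prop) :=
  (forall mx, U mx -> FVdual (fun f => oT TK (projT1 mx) f (projT2 mx))) /\
  forall f, FVK f ->
    (forall mx, U mx -> oT TK (projT1 mx) f (projT2 mx) = 0) -> f = (fun _ => 0).

Definition FVG (G : (E -> K) -> Prop) (U : {m : Mt D & om D m} -> Prop)
    (h : {m : Mt D & om D m} -> E) :=
  forall e, G e -> exists fe, FVK fe /\
    forall mx, U mx -> oT TK (projT1 mx) fe (projT2 mx) = e (h mx).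

Definition RUG (f : Om D -> E) : {m : Mt D & om D m} -> E :=
  fun mx => oT TE (projT1 mx) f (projT2 mx).
End Scalar.
End Defs.

Arguments Ml {K} D _ _ : rename.
Arguments M0 {K} D _ : rename.
Arguments Mr {K} D _ : rename.
Arguments om {K} D _ : rename.
Arguments nu {K} D _ _ _ _ : rename.
Arguments emb {K} D _ _ : rename.

(* R_{U,G} is linear, so it suffices that d := S(u) - S(v) vanishes whenever
   its restriction to U does.  Consistency puts every S(u) in FV(Omega, E):
   p_a(T^E_m S(u)(x)) nu(x) = p_a(u(nu T^K_{m,x})) is controlled by the
   continuity of u on FV(Omega)'_kappa, because compact subsets of FV(Omega)
   are bounded.  Strength then gives e o d in FV(Omega) for e in G, with
   T^K_m(e o d) = e o T^E_m d vanishing on U; since U is a set of uniqueness,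
   e o d = 0, and since G separates points, d = 0. *)

From HB Require Import structures.
From mathcomp Require Import all_boot all_order all_algebra.
From Stdlib Require Import FunctionalExtensionality.
Set Implicit Arguments. Unset Strict Implicit. Unset Printing Implicit Defensive.
Import Order.TTheory GRing.Theory Num.Theory.
Local Open Scope ring_scope.

Lemma ler_sum_term (R : numDomainType) n (F : 'I_n -> R) k :
  (forall j, 0 <= F j) -> F k <= \sum_j F j.
Proof. by move=> F0; rewrite (bigD1 k) //= lerDl sumr_ge0. Qed.

Section OperatorFamily.
Variables (K : numFieldType) (D : wdata K) (F : lmodType K) (T : opfam D F).
Hypothesis Tok : opfam_ok T.

Lemma odom0 m : odom T m (fun _ => 0).
Proof. by have [] := Tok m. Qed.

Lemma odom_lin m f g a :
  odom T m f -> odom T m g -> odom T m (fun x => a *: f x + g x).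
Proof. by move=> df dg; have [_ /(_ f g a df dg) []] := Tok m. Qed.

Lemma oT_lin m f g a (y : om D m) : odom T m f -> odom T m g ->
  oT T (fun x => a *: f x + g x) y = a *: oT T f y + oT T g y.
Proof. by move=> df dg; have [_ /(_ f g a df dg) [_ ->]] := Tok m. Qed.

Lemma oT0 m (y : om D m) : oT T (fun _ => 0) y = 0.
Proof.
have /= := oT_lin (-1) y (odom0 m) (odom0 m).
have -> : (fun _ : Om D => -1 *: (0 : F) + 0) = (fun _ => 0).
  by apply: functional_extensionality => _; rewrite scaler0 addr0.
by rewrite scaleN1r addNr.
Qed.

End OperatorFamily.

Section Seminorms.
Variables (K : numFieldType) (D : wdata K) (F : lmodType K) (A : Type).
Variables (p : A -> F -> K) (T : opfam D F).
Hypothesis nu_ge0 : forall j l m x, 0 <= nu D j l m x.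
Hypothesis p_seminorm : forall a, is_seminorm (p a).
Hypothesis Tok : opfam_ok T.

Lemma seminorm_ge0 a v : 0 <= p a v.
Proof. by have [] := p_seminorm a. Qed.

Lemma seminormD a v w : p a (v + w) <= p a v + p a w.
Proof. by have [] := p_seminorm a. Qed.

Lemma seminormZ a c v : p a (c *: v) = `|c| * p a v.
Proof. by have [] := p_seminorm a. Qed.

Lemma seminorm0 a : p a 0 = 0.
Proof. by rewrite -(scale0r 0) seminormZ normr0 mul0r. Qed.

Lemma FVqle_le i f r r' : FVqle p T i f r -> r <= r' -> FVqle p T i f r'.
Proof. by move=> hf le x m hm; apply: le_trans (hf x m hm) le. Qed.

Lemma FVqle_norm i f r : FVqle p T i f r -> FVqle p T i f `|r|.
Proof.
move=> hf x m hm; have le := hf x m hm.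
by rewrite ger0_norm // (le_trans _ le) // mulr_ge0 ?seminorm_ge0.
Qed.

Lemma FVqle0 {i} : FVqle p T i (fun _ => 0) 0.
Proof. by move=> x m _; rewrite oT0 // seminorm0 mul0r. Qed.

Lemma FVqle_lin i f g a r s :
  (forall m, odom T m f) -> (forall m, odom T m g) ->
  FVqle p T i f r -> FVqle p T i g s ->
  FVqle p T i (fun x => a *: f x + g x) (`|a| * r + s).
Proof.
move=> df dg hf hg x m hm; rewrite oT_lin //.
apply: le_trans (ler_wpM2r (nu_ge0 _ _ _ _) (seminormD _ _ _)) _.
by rewrite seminormZ mulrDl -mulrA lerD ?ler_wpM2l ?hf ?hg.
Qed.

Lemma FVsp0 : FVsp p T (fun _ => 0).
Proof.
split; first by split=> [m|m _ y]; [exact: odom0 | rewrite oT0].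
by move=> i; exists 0; exact: FVqle0.
Qed.

Lemma FVsp_lin f g a :
  FVsp p T f -> FVsp p T g -> FVsp p T (fun x => a *: f x + g x).
Proof.
move=> [[df zf] bf] [[dg zg] bg]; split; first split.
- by move=> m; exact: odom_lin.
- by move=> m hm y; rewrite oT_lin // zf // zg // scaler0 addr0.
move=> i; have [r hf] := bf i; have [s hg] := bg i.
by exists (`|a| * r + s); exact: FVqle_lin.
Qed.

End Seminorms.

Lemma wdata_nu_ge0 (K : numFieldType) (D : wdata K) :
  wdata_ok D -> forall j l m x, 0 <= nu D j l m x.
Proof. by case=> _ [_ [_ [_ [_ []]]]]. Qed.

Lemma Kp_seminorm (K : numFieldType) a : is_seminorm (@Kp K a).
Proof. by split=> [v|v w|c v]; rewrite /Kp ?normr_ge0 ?ler_normD ?normrM. Qed.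

Section ScalarSpace.
Variables (K : numFieldType) (D : wdata K) (TK : opfam D K^o).
Hypotheses (wd : wdata_ok D) (TKok : opfam_ok TK).

Let nu_ge0 := wdata_nu_ge0 wd.

Lemma FVK0 : FVK TK (fun _ => 0).
Proof. exact: FVsp0 (@Kp_seminorm K) TKok. Qed.

Lemma FVK_lin f g (a : K) : FVK TK f -> FVK TK g -> FVK TK (fun x => a * f x + g x).
Proof. exact: FVsp_lin nu_ge0 (@Kp_seminorm K) TKok f g a. Qed.

Lemma FVdual0 y : FVdual TK y -> y (fun _ => 0) = 0.
Proof.
move=> [lin _]; have /= := lin _ _ (-1) FVK0 FVK0.
have -> : (fun _ : Om D => -1 * (0 : K) + 0) = (fun _ => 0).
  by apply: functional_extensionality => _; rewrite mulr0 addr0.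
by rewrite mulN1r addNr.
Qed.

Lemma FVdual_vanishing y : (forall f, FVK TK f -> y f = 0) -> FVdual TK y.
Proof.
move=> y0; split=> [f g a hf hg|].
  by rewrite !y0 ?mulr0 ?addr0 //; exact: FVK_lin.
have [_ [[j] [[l] _]]] := wd.
exists 0%N, (fun _ => (j, l, tt)), 1; split=> // f hf _.
by rewrite y0 // normr0 ler01.
Qed.

Lemma FVdual_zero : FVdual TK (fun _ => 0).
Proof. exact: FVdual_vanishing. Qed.

Lemma FVdual_scale y (c : K) : FVdual TK y -> FVdual TK (fun f => c * y f).
Proof.
move=> hy; have y0 := FVdual0 hy; case: hy => [lin [n [idx [r [r0 hy]]]]].
split=> [f g a hf hg|]; first by rewrite lin // mulrDr mulrCA.
pose t : K := `|c| + 1; have t0 : 0 < t by rewrite ltr_wpDl.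
exists n, idx, (r / t); split=> [|f hf hfr]; first by rewrite divr_gt0.
have htf : FVK TK (fun x => t * f x + 0) by apply: FVK_lin => //; exact: FVK0.
have hq : forall i, FVqle (Kp (K:=K)) TK (idx i) (fun x => t * f x + 0) r.
  move=> i; have [[df _] _] := hf.
  have := FVqle_lin nu_ge0 (@Kp_seminorm K) TKok t df (odom0 TKok) (hfr i)
    (FVqle0 (@Kp_seminorm K) TKok).
  by rewrite gtr0_norm // mulrC divfK ?gt_eqF // addr0; apply.
have := hy _ htf hq; rewrite lin //; last exact: FVK0.
rewrite y0 addr0 !normrM (gtr0_norm t0); apply: le_trans.
by rewrite ler_wpM2r // lerDl.
Qed.

Definition FVsublevel i b f := exists2 r, r < b & FVqle (Kp (K:=K)) TK i f r.

Lemma FVopen_sublevel i b : FVopen TK (FVsublevel i b).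
Proof.
move=> f [r rb hf] [[df _] _]; pose c := (r + b) / 2.
have [rc cb] := midf_lt rb.
exists 1%N, (fun _ => i), (c - r); split=> [|g [[dg _] _] hgf]; first by rewrite subr_gt0.
exists c => //.
have dgf : forall m, odom TK m (fun x => g x - f x).
  move=> m; have -> : (fun x => g x - f x) = (fun x => -1 * f x + g x).
    by apply: functional_extensionality => x; rewrite mulN1r addrC.
  exact: odom_lin.
have eg : g = (fun x => 1 * (g x - f x) + f x).
  by apply: functional_extensionality => x; rewrite mul1r subrK.
have := FVqle_lin nu_ge0 (@Kp_seminorm K) TKok 1 dgf df (hgf ord0) hf.
by rewrite normr1 mul1r subrK -eg.
Qed.

Lemma FVcompact_bounded C i : FVcompact TK C ->
  exists M, 0 <= M /\ forall f, C f -> FVqle (Kp (K:=K)) TK i f M.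
Proof.
move=> [CFV cover].
have [n [s hs]] : exists n (s : 'I_n -> K), forall f, C f ->
    exists k, FVsublevel i `|s k| f.
  apply: (cover K (fun s => FVsublevel i `|s|)) => [s|f Cf].
    exact: FVopen_sublevel.
  have [_ /(_ i) [B hB]] := CFV f Cf.
  have B1 : 0 <= `|B| + 1 by rewrite addr_ge0.
  exists (`|B| + 1), `|B|; first by rewrite (ger0_norm B1) ltrDl.
  exact: FVqle_norm nu_ge0 (@Kp_seminorm K) _ _ _ hB.
exists (\sum_k `|s k|); split=> [|f Cf]; first exact: sumr_ge0.
have [k [r rs hf]] := hs f Cf.
by apply: FVqle_le hf _; apply: le_trans (ltW rs) (ler_sum_term _ _).
Qed.

Lemma FVcompacts_bounded n (Ks : 'I_n -> (Om D -> K) -> Prop) i :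
  (forall k, FVcompact TK (Ks k)) ->
  exists M, 0 <= M /\ forall k f, Ks k f -> FVqle (Kp (K:=K)) TK i f M.
Proof.
move=> hK; have [M hM] := fin_all_exists (fun k => FVcompact_bounded i (hK k)).
exists (\sum_k M k); split=> [|k f hf]; first by apply: sumr_ge0 => k _; case: (hM k).
have [_ /(_ f hf) hMk] := hM k.
by apply: FVqle_le hMk _; apply: ler_sum_term => j; case: (hM j).
Qed.

End ScalarSpace.

Section EpsilonProduct.
Variables (K : numFieldType) (D : wdata K) (TK : opfam D K^o).
Variables (E : lmodType K) (A : Type) (p : A -> E -> K) (TE : opfam D E).
Variable u : ((Om D -> K) -> K) -> E.
Hypotheses (wd : wdata_ok D) (TKok : opfam_ok TK).
Hypothesis p_seminorm : forall a, is_seminorm (p a).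
Hypothesis hu : epsprod TK p u.

Lemma epsprod0 : u (fun _ => 0) = 0.
Proof.
have z := FVdual_zero wd TKok; have [lin _] := hu; have /= := lin _ _ (-1) z z.
have -> : (fun _ : Om D -> K => -1 * (0 : K) + 0) = (fun _ => 0).
  by apply: functional_extensionality => _; rewrite mulr0 addr0.
by rewrite scaleN1r addNr.
Qed.

Lemma epsprodZ y c : FVdual TK y -> u (fun f => c * y f) = c *: u y.
Proof.
move=> hy; have [lin _] := hu.
have /= := lin _ _ c hy (FVdual_zero wd TKok); rewrite epsprod0 addr0.
have -> // : (fun f => c * y f + 0) = (fun f => c * y f).
by apply: functional_extensionality => f; rewrite addr0.
Qed.

Lemma epsprod_bound a : exists n (Ks : 'I_n -> (Om D -> K) -> Prop) (r : K),
  [/\ 0 < r, forall k, FVcompact TK (Ks k) &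
      forall y s, FVdual TK y -> 0 <= s -> (forall k f, Ks k f -> `|y f| <= s) ->
        r * p a (u y) <= s].
Proof.
have [_ /(_ a) [n [Ks [r [r0 hK hc]]]]] := hu.
exists n, Ks, r; split=> // [k|y s hy s0 hys]; first by case: (hK k).
apply/ler_addgt0Pr => e e0; have t0 : 0 < s + e by rewrite ltr_wpDl.
have rt0 : 0 < r / (s + e) by rewrite divr_gt0.
have hyt : forall k f, Ks k f -> `|r / (s + e) * y f| <= r.
  move=> k f hf; rewrite normrM (gtr0_norm rt0) mulrAC ler_pdivrMr //.
  by rewrite ler_wpM2l ?(ltW r0) // (le_trans (hys k f hf)) // lerDl ltW.
have := hc _ (FVdual_scale wd TKok (r / (s + e)) hy) hyt.
by rewrite epsprodZ // seminormZ // gtr0_norm // mulrAC ler_pdivrMr // mul1r.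
Qed.

Lemma epsprod_vanishing y : (forall v, (forall a, p a v = 0) -> v = 0) ->
  (forall f, FVK TK f -> y f = 0) -> u y = 0.
Proof.
move=> p_sep y0; apply: p_sep => a.
have [n [Ks [r [r0 hK hb]]]] := epsprod_bound a.
have := hb y 0 (FVdual_vanishing wd TKok y0) (lexx 0).
have /[swap]/[apply] : forall k f, Ks k f -> `|y f| <= 0.
  by move=> k f hf; rewrite y0 ?normr0 //; apply: (hK k).1.
by rewrite pmulr_rle0 // => le; apply/eqP; rewrite eq_le le seminorm_ge0.
Qed.

Hypothesis hcons : consistent TK p TE.

Lemma Smap_FVqle j l a : exists B, FVqle p TE (j, l, a) (Smap u) B.
Proof.
have [n [Ks [r [r0 hK hb]]]] := epsprod_bound a.
have [M [M0 hM]] := FVcompacts_bounded wd TKok (j, l, tt) hK.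
exists (M / r) => x m hm /=; have [_ hT ->] := hcons hu (emb D m x).
have nu0 := wdata_nu_ge0 wd j l m x.
have hTb : forall k f, Ks k f -> `|nu D j l m x * oT TK f (emb D m x)| <= M.
  by move=> k f hf; rewrite normrM (ger0_norm nu0) mulrC; exact: hM k f hf x m hm.
have := hb _ M (FVdual_scale wd TKok (nu D j l m x) hT) M0 hTb.
rewrite epsprodZ // seminormZ // (ger0_norm nu0) ler_pdivlMr //.
by rewrite mulrC [_ * nu _ _ _ _ _]mulrC.
Qed.

Lemma Smap_FVsp : (forall v, (forall a, p a v = 0) -> v = 0) -> FVsp p TE (Smap u).
Proof.
move=> p_sep; have [_ [_ [_ [_ [om_inh _]]]]] := wd.
split; last by case=> [[j l] a]; exact: Smap_FVqle.
split=> [m|m m0 y]; first by have [y] := om_inh m; have [] := hcons hu y.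
have [_ _ ->] := hcons hu y; apply: epsprod_vanishing => // f [[_ zf] _].
exact: zf.
Qed.

End EpsilonProduct.

Section ContinuousDual.
Variables (K : numFieldType) (E : lmodType K) (A : Type) (p : A -> E -> K).
Variable e : E -> K.
Hypothesis p_seminorm : forall a, is_seminorm (p a).
Hypothesis he : Edual p e.

Lemma Edual0 : e 0 = 0.
Proof.
have [lin _] := he; have := lin 0 0 (-1).
by rewrite scaler0 addr0 mulN1r addNr.
Qed.

Lemma EdualZ c v : e (c *: v) = c * e v.
Proof. by have [lin _] := he; have := lin v 0 c; rewrite !addr0 Edual0 addr0. Qed.

Lemma Edual_bound : exists n (idx : 'I_n -> A) (r : K),
  0 < r /\ forall v, r * `|e v| <= \sum_i p (idx i) v.
Proof.
have [_ [n [idx [r [r0 he1]]]]] := he.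
exists n, idx, r; split=> // v; apply/ler_addgt0Pr => eps eps0.
have pv0 : 0 <= \sum_i p (idx i) v by apply: sumr_ge0 => i _; exact: seminorm_ge0.
have s0 : 0 < \sum_i p (idx i) v + eps by rewrite ltr_wpDl.
have rs0 : 0 < r / (\sum_i p (idx i) v + eps) by rewrite divr_gt0.
have hv : forall i, p (idx i) ((r / (\sum_i p (idx i) v + eps)) *: v) <= r.
  move=> i; rewrite seminormZ // gtr0_norm // mulrAC ler_pdivrMr // ler_pM2l //.
  have := ler_sum_term i (fun j => seminorm_ge0 p_seminorm (idx j) v).
  by move=> /le_trans; apply; rewrite lerDl ltW.
have := he1 _ hv.
by rewrite EdualZ normrM gtr0_norm // mulrAC ler_pdivrMr // mul1r.
Qed.

End ContinuousDual.

Lemma comp_FVK (K : numFieldType) (D : wdata K) (TK : opfam D K^o)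
    (E : lmodType K) (A : Type) (p : A -> E -> K) (TE : opfam D E) e f :
  wdata_ok D -> (forall a, is_seminorm (p a)) -> strong TK p TE ->
  Edual p e -> FVsp p TE f -> FVK TK (fun x => e (f x)).
Proof.
move=> wd p_seminorm hstr he hf; have [[_ zf] bf] := hf.
split; first split=> [m|m m0 y]; first by have [] := hstr e he f hf m.
  by have [_ ->] := hstr e he f hf m; rewrite zf // (Edual0 he).
case=> [[j l] []]; have [n [idx [r [r0 hb]]]] := Edual_bound p_seminorm he.
have [B hB] := fin_all_exists (fun k => bf (j, l, idx k)).
exists ((\sum_k B k) / r) => x m hm /=; have [_ ->] := hstr e he f hf m.
rewrite /Kp ler_pdivlMr // mulrAC [_ * r]mulrC.
apply: le_trans (ler_wpM2r (wdata_nu_ge0 wd j l m x) (hb _)) _.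
by rewrite mulr_suml; apply: ler_sum => k _; exact: hB k x m hm.
Qed.

Lemma FVsp_uniqueness (K : numFieldType) (D : wdata K) (TK : opfam D K^o)
    (E : lmodType K) (A : Type) (p : A -> E -> K) (TE : opfam D E)
    (G : (E -> K) -> Prop) (U : {m : Mt D & om D m} -> Prop) f :
  wdata_ok D -> (forall a, is_seminorm (p a)) -> separating p G ->
  strong TK p TE -> uniqueness_set TK U ->
  FVsp p TE f -> (forall mx, U mx -> RUG TE f mx = 0) -> f = (fun _ => 0).
Proof.
move=> wd p_seminorm [G_dual _ _ G_sep] hstr [_ U_uniq] hf fU.
apply: functional_extensionality => x; apply: G_sep => e Ge.
have he := G_dual e Ge.
suff : (fun x => e (f x)) = (fun _ => 0) by move/(congr1 (fun h => h x)).
apply: U_uniq => [|[m y] /= Uy]; first exact: comp_FVK wd p_seminorm hstr he hf.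
have [_ ->] := hstr e he f hf m; have := fU _ Uy; rewrite /RUG /= => ->.
exact: Edual0 he.
Qed.

Theorem proposition3p10 (K : numFieldType) (E : lmodType K) (A : Type)
    (p : A -> E -> K) (D : wdata K) (TK : opfam D K^o) (TE : opfam D E)
    (G : (E -> K) -> Prop) (U : {m : Mt D & om D m} -> Prop) :
  lcHs p -> nontrivial E -> wdata_ok D ->
  separating p G ->
  defining_family TK p TE -> strong TK p TE -> consistent TK p TE ->
  uniqueness_set TK U ->
  forall f g : Om D -> E,
    Srange TK p f -> Srange TK p g ->
    (forall mx, U mx -> RUG TE f mx = RUG TE g mx) ->
    f = g.
Proof.
move=> [_ p_seminorm _ p_sep] _ wd hG [TKok TEok _ _ _] hstr hcons hU.
move=> _ _ [u [hu ->]] [v [hv ->]] hR.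
have hSu := Smap_FVsp wd TKok p_seminorm hu hcons p_sep.
have hSv := Smap_FVsp wd TKok p_seminorm hv hcons p_sep.
pose d x := -1 *: Smap v x + Smap u x.
have hd : FVsp p TE d := FVsp_lin (wdata_nu_ge0 wd) p_seminorm TEok (-1) hSv hSu.
have dU : forall mx, U mx -> RUG TE d mx = 0.
  move=> [m y] Uy; have [[dSu _] _] := hSu; have [[dSv _] _] := hSv.
  rewrite /RUG /= (oT_lin TEok) //; have := hR _ Uy; rewrite /RUG /= => ->.
  by rewrite scaleN1r addNr.
have d0 := FVsp_uniqueness wd p_seminorm hG hstr hU hd dU.
apply: functional_extensionality => x; apply/eqP; rewrite -subr_eq0; apply/eqP.
by have /= := congr1 (fun h => h x) d0; rewrite /d scaleN1r addrC.
Qed.
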